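(* Let $X$ be a finite $s$-regular graph with vertex set $X^0$ and let $\lambda_2$ be the second largest eigenvalue of its adjacency matrix. Let $0<\alpha$, let $S\subset X^0$ with $|S|\le\alpha|X^0|$, let $0<b\le s$, and let $$A=\{v\in S : |(\delta S)_v|\ge s-b\},$$ where $(\delta S)_v=\delta S\cap\delta v$. Put $\beta=\big((b-\lambda_2)-\alpha(s-\lambda_2)\big)b^{-1}$. Then $|A|\ge\beta|S|$.
   Context: For a vertex $v$, $\delta v$ is the set of edges incident to $v$. For $S\subset X^0$, $\delta S$ denotes the set of edges with one endpoint in $S$ and the other in $X^0\setminus S$. *)

From HB Require Import structures.
From mathcomp Require Import all_boot all_order all_algebra.
From mathcomp Require Import reals.
Set Implicit Arguments. Unset Strict Implicit. Unset Printing Implicit Defensive.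
Import Order.TTheory GRing.Theory Num.Theory.
Local Open Scope ring_scope.

Definition simple_graph (n : nat) (e : rel 'I_n) : Prop :=
  symmetric e /\ irreflexive e.

(* The neighbourhood of v, i.e. the other endpoints of the edges in delta v. *)
Definition nbhd (n : nat) (e : rel 'I_n) (v : 'I_n) : {set 'I_n} :=
  [set w | e v w].

Definition regular (n : nat) (e : rel 'I_n) (s : nat) : Prop :=
  forall v, #|nbhd e v| = s.

Definition adjmx (R : nzRingType) (n : nat) (e : rel 'I_n) : 'M[R]_n :=
  \matrix_(i, j) (e i j)%:R.

(* ev is the list of eigenvalues of M, with multiplicity, in non-increasing
   order: the roots of the characteristic polynomial. *)
Definition eigen_list (R : realFieldType) (n : nat) (M : 'M[R]_n) (ev : seq R) : Prop :=
  sorted (fun x y => y <= x) ev /\ char_poly M = \prod_(x <- ev) ('X - x%:P).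

(* |(delta S)_v| : number of edges incident to v leaving S. *)
Definition bdry_deg (n : nat) (e : rel 'I_n) (S : {set 'I_n}) (v : 'I_n) : nat :=
  #|[set w in nbhd e v | w \notin S]|.

From HB Require Import structures.
From mathcomp Require Import all_boot all_order all_algebra.
From mathcomp Require Import reals.
From mathcomp Require Import complex ring lra.
Set Implicit Arguments. Unset Strict Implicit. Unset Printing Implicit Defensive.
Import Order.TTheory GRing.Theory Num.Theory.
Local Open Scope ring_scope.

(* Let 1_S be the indicator of S, k = |S|, c = k / n and x = 1_S - c 1, so
   that x is orthogonal to the all-ones vector 1.  Since the adjacency matrix
   Adj is symmetric with 1 Adj = s 1, the quadratic forms of the centred
   vector x are those of 1_S shifted by c s k (resp. c k), and
     x Adj x^T = s k - |dS| - c s k,        x x^T = k - c k,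
   where |dS| = sum_(v in S) |(dS)_v| counts the edges leaving S.
   The Rayleigh bound x Adj x^T <= lambda_2 x x^T on the orthogonal complement
   of 1 then gives |dS| >= (s - lambda_2) k (1 - c), while counting per
   vertex gives |dS| <= (s - b) k + b |A|; with c <= alpha this is the claim. *)

Lemma char_poly_conj (F : fieldType) n (P D : 'M[F]_n) :
  P \in unitmx -> char_poly (invmx P *m D *m P) = char_poly D.
Proof.
move=> P_unit; rewrite /char_poly /char_poly_mx.
have XE : ('X%:M : 'M[{poly F}]_n) =
    map_mx polyC (invmx P) *m 'X%:M *m map_mx polyC P.
  by rewrite -mulmxA mul_scalar_mx -scalemxAr -map_mxM mulVmx // map_mx1 scalemx1.
rewrite {1}XE !map_mxM -mulmxBl -mulmxBr !det_mulmx !det_map_mx.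
by rewrite mulrC mulrA -rmorphM det_inv divrr -?unitmxE // rmorph1 mul1r.
Qed.

Lemma count_gt_second (R : realDomainType) (ev : seq R) :
  sorted (fun x y => y <= x) ev ->
  (count (fun t : R => (nth 0%R ev 1 < t)%R) ev <= 1)%N.
Proof.
case: ev => [|a [|b l]] //=; first by case: (_ < _).
move=> /andP [_ path_b].
have le_b : all (fun t => t <= b) l.
  exact: order_path_min (fun x y z (h1 : x <= y) (h2 : z <= x) => le_trans h2 h1) path_b.
have -> : count (fun t => b < t) l = 0%N.
  apply/eqP; rewrite -leqn0 leqNgt -has_count.
  by apply/hasPn => t /(allP le_b); rewrite leNgt.
by rewrite ltxx; case: (_ < _).
Qed.

Lemma card_gt_second (R : realDomainType) n (d : 'I_n -> R) (ev : seq R) :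
  perm_eq [seq d i | i <- index_enum 'I_n] ev -> sorted (fun x y => y <= x) ev ->
  (#|[pred i | (nth 0 ev 1 < d i)%R]| <= 1)%N.
Proof.
move=> perm_d ev_sorted.
rewrite cardE -deprecated_filter_index_enum size_filter -count_map.
by rewrite (permP perm_d); apply: count_gt_second.
Qed.

(* Eigenvalues of a nonnegative matrix whose columns all sum to s are at most
   s: look at a coordinate of maximal modulus of an eigenvector. *)
Lemma eigenvalue_le_col_sum (R : realFieldType) n (A : 'M[R]_n) (s t : R) :
  (forall i j, 0 <= A i j) -> (forall j, \sum_i A i j = s) ->
  root (char_poly A) t -> t <= s.
Proof.
move=> A_ge0 col_sum; rewrite -eigenvalue_root_char => /eigenvalueP [v vA v_neq0].
have [j0 vj0_neq0] : exists j, v 0 j != 0.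
  apply/existsP; apply: contraR v_neq0; rewrite negb_exists => /forallP v0.
  by apply/eqP/rowP => j; rewrite mxE; apply/eqP/negbNE/v0.
pose j := Order.arg_max j0 xpredT (fun k => `|v 0 k|).
have j_max k : `|v 0 k| <= `|v 0 j| by rewrite /j; case: arg_maxP => // i _; apply.
have vj_gt0 : 0 < `|v 0 j| by apply: lt_le_trans (j_max j0); rewrite normr_gt0.
have : `|t| * `|v 0 j| <= s * `|v 0 j|.
  move/rowP: vA => /(_ j); rewrite !mxE => vAj.
  rewrite -normrM -vAj (le_trans (ler_norm_sum _ _ _)) // -(col_sum j) mulr_suml.
  apply: ler_sum => i _; rewrite normrM (ger0_norm (A_ge0 i j)) mulrC.
  by rewrite ler_wpM2l.
by rewrite ler_pM2r // => /(le_trans (ler_norm t)).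
Qed.

(* Real symmetric matrices over a real closed field R, studied through their
   image in the algebraically closed field C = R[i] where the spectral
   theorem of mathcomp applies. *)
Section RealSymmetric.
Local Open Scope sesquilinear_scope.
Variable R : rcfType.
Local Notation C := R[i].
Local Notation toC := (real_complex R).

Lemma real_complex_Re (z : C) : z \is Num.real -> z = toC (complex.Re z).
Proof. by case: z => a b /orP[]; rewrite lecE /= => /andP[/eqP b0 _]; subst b. Qed.

Lemma adjoint_real m k (M : 'M[R]_(m, k)) : (map_mx toC M)^t* = map_mx toC M^T.
Proof. by apply/matrixP => i j; rewrite !mxE; apply: conjc_real. Qed.

Lemma adjointM m k l (M : 'M[C]_(m, k)) (N : 'M[C]_(k, l)) :
  (M *m N)^t* = N^t* *m M^t*.
Proof. by rewrite trmx_mul map_mxM. Qed.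

Lemma real_symmetric_spectral n (A : 'M[R]_n) (ev : seq R) :
  A^T = A -> char_poly A = \prod_(x <- ev) ('X - x%:P) ->
  exists P : 'M[C]_n, exists d : 'I_n -> R,
    [/\ P \is unitarymx, map_mx toC A = P^t* *m diag_mx (\row_i toC (d i)) *m P
      & perm_eq [seq d i | i <- index_enum 'I_n] ev].
Proof.
move=> A_sym charA; set Ac := map_mx toC A.
have Ac_herm : Ac \is hermsymmx.
  by apply/is_hermitianmxP; rewrite expr0 scale1r adjoint_real A_sym.
set P := spectralmx Ac; set D := spectral_diag Ac.
have P_unitary : P \is unitarymx := spectral_unitarymx Ac.
have AcE : Ac = P^t* *m diag_mx D *m P.
  by rewrite -invmx_unitary //; apply/orthomx_spectralP/hermitian_normalmx.
have D_real i : D 0 i = toC (complex.Re (D 0 i)).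
  exact/real_complex_Re/mxOverP/hermitian_spectral_diag_real.
exists P, (fun i => complex.Re (D 0 i)); split=> //.
  by rewrite AcE; congr (_ *m diag_mx _ *m _); apply/rowP => i; rewrite mxE -D_real.
have charD : char_poly Ac = \prod_i ('X - (D 0 i)%:P).
  rewrite AcE -invmx_unitary // char_poly_conj ?unitarymx_unit //.
  rewrite char_poly_trig ?diag_mx_is_trig //.
  by apply: eq_bigr => i _; rewrite mxE eqxx mulr1n.
have charAc : char_poly Ac = \prod_(y <- map toC ev) ('X - y%:P).
  rewrite -map_char_poly charA rmorph_prod big_map; apply: eq_bigr => y _.
  by rewrite rmorphB /= map_polyX map_polyC.
have permD : perm_eq [seq D 0 i | i <- index_enum 'I_n] (map toC ev).
  by apply: prod_XsubC_eq; rewrite big_map -charAc charD.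
have := perm_map (@complex.Re R) permD.
by rewrite -!map_comp (map_id_in (fun y _ => erefl _)).
Qed.

Lemma form_diag n (a b : 'rV[C]_n) (d : 'I_n -> C) :
  (a *m diag_mx (\row_i d i) *m b^t*) 0 0 = \sum_i d i * (a 0 i * (b 0 i)^*).
Proof.
rewrite mul_mx_diag mxE; apply: eq_bigr => i _.
by rewrite !mxE mulrCA mulrA.
Qed.

Lemma form_id n (a b : 'rV[C]_n) : (a *m b^t*) 0 0 = \sum_i a 0 i * (b 0 i)^*.
Proof. by rewrite mxE; apply: eq_bigr => i _; rewrite !mxE. Qed.

Lemma form_unitary n (P : 'M[C]_n) (u v : 'rV[C]_n) :
  P \is unitarymx -> (u *m P^t*) *m (v *m P^t*)^t* = u *m v^t*.
Proof. by move=> P_unitary; rewrite adjointM trmxCK mulmxA mulmxKtV. Qed.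

Lemma form_unitary_conj n (P M : 'M[C]_n) (u v : 'rV[C]_n) :
  u *m (P^t* *m M *m P) *m v^t* = (u *m P^t*) *m M *m (v *m P^t*)^t*.
Proof. by rewrite !adjointM trmxCK !mulmxA. Qed.

Lemma rayleigh_coords n (d : 'I_n -> R) (w z : 'I_n -> C) (l s : R) :
  (#|[pred i | (l < d i)%R]| <= 1)%N ->
  (forall i, d i <= s) ->
  (forall i, z i != 0 -> d i = s) ->
  (exists i, z i != 0) ->
  \sum_i w i * (z i)^* = 0 ->
  \sum_i toC (d i) * (w i * (w i)^*) <= toC l * \sum_i w i * (w i)^*.
Proof.
move=> card_gt_l d_le_s z_top [i0 zi0] w_orth_z.
rewrite mulr_sumr; apply: ler_sum => i _.
have [d_le_l|l_lt_d] := leP (d i) l.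
  by rewrite ler_wpM2r ?mul_conjC_ge0 ?lecR.
suff -> : w i = 0 by rewrite mul0r !mulr0.
have z_supp j : z j != 0 -> j = i.
  move=> zj; apply: (card_le1_eqP card_gt_l); rewrite inE //=.
  by rewrite z_top // (lt_le_trans l_lt_d).
have zi : z i != 0 by rewrite -(z_supp i0 zi0).
move: w_orth_z; rewrite (bigD1 i) //= big1 ?addr0 => [/eqP|j ji].
  by rewrite mulf_eq0 conjC_eq0 (negbTE zi) orbF => /eqP.
have [->|zj] := eqVneq (z j) 0; first by rewrite conjC0 mulr0.
by rewrite (z_supp j zj) eqxx in ji.
Qed.

Lemma second_eigenvalue_bound n (A : 'M[R]_n) (ev : seq R) (s : R) :
  A^T = A -> sorted (fun x y => y <= x) ev ->
  char_poly A = \prod_(x <- ev) ('X - x%:P) ->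
  (forall t, t \in ev -> t <= s) ->
  (const_mx 1 : 'rV[R]_n) *m A = s *: const_mx 1 ->
  forall x : 'rV[R]_n, \sum_i x 0 i = 0 ->
  (x *m A *m x^T) 0 0 <= nth 0 ev 1 * (x *m x^T) 0 0.
Proof.
move=> A_sym ev_sorted charA ev_le_s one_eigen x x_orth_one.
have [n0|n_gt0] := posnP n.
  have -> : x = 0 by apply/rowP => i; have := ltn_ord i; rewrite {2}n0.
  by rewrite !mul0mx mxE mulr0.
have [P [d [P_unitary AE perm_d]]] := real_symmetric_spectral A_sym charA.
set D := diag_mx _ in AE.
pose o : 'rV[R]_n := const_mx 1.
pose w := map_mx toC x *m P^t*; pose z := map_mx toC o *m P^t*.
have z_eigen : z *m D = toC s *: z.
  have : map_mx toC (o *m A) *m P^t* = toC s *: z.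
    by rewrite one_eigen map_mxZ -scalemxAl.
  by rewrite map_mxM AE !mulmxA mulmxtVK.
have z_neq0 : exists i, z 0 i != 0.
  apply/existsP; apply: contraT; rewrite negb_exists => /forallP z0.
  have : z *m P = map_mx toC o by rewrite mulmxKtV.
  have -> : z = 0 by apply/rowP => i; rewrite [RHS]mxE; apply/eqP/negbNE/z0.
  rewrite mul0mx => /rowP/(_ (Ordinal n_gt0)).
  by rewrite !mxE rmorph1 => /eqP; rewrite eq_sym oner_eq0.
have w_orth_z : \sum_i w 0 i * (z 0 i)^* = 0.
  rewrite -form_id form_unitary // adjoint_real -map_mxM mxE.
  rewrite -(rmorph0 toC) -x_orth_one mxE.
  by congr toC; apply: eq_bigr => i _; rewrite !mxE mulr1.
have entryC (M : 'M[R]_1) : toC (M 0 0) = map_mx toC M 0 0 by rewrite mxE.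
rewrite -lecR rmorphM /= !entryC !map_mxM AE -!adjoint_real.
rewrite form_unitary_conj -(form_unitary (map_mx toC x) _ P_unitary) form_diag form_id.
apply: (rayleigh_coords (card_gt_second perm_d ev_sorted) _ _ z_neq0 w_orth_z).
  by move=> i; apply/ev_le_s; rewrite -(perm_mem perm_d) map_f ?mem_index_enum.
move=> i zi; apply: complexI; apply: (mulIf zi).
by move/rowP: z_eigen => /(_ i); rewrite mul_mx_diag !mxE mulrC.
Qed.

End RealSymmetric.

Lemma centred_form (F : comNzRingType) n (M : 'M[F]_n) (r c : F) (u : 'rV[F]_n) :
  M^T = M -> (const_mx 1 : 'rV_n) *m M = r *: const_mx 1 ->
  c * n%:R = \sum_i u 0 i ->
  ((u - c *: const_mx 1) *m M *m (u - c *: const_mx 1)^T) 0 0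
    = (u *m M *m u^T) 0 0 - c * r * \sum_i u 0 i.
Proof.
set o : 'rV_n := const_mx 1 => M_sym oM cn.
have Mo : M *m o^T = r *: o^T by rewrite -[M]M_sym -trmx_mul oM linearZ.
have oZ : (c *: o)^T = c *: o^T by apply/matrixP => i j; rewrite !mxE.
rewrite linearB /= oZ mulmxBl -scalemxAl oM mulmxBl !mulmxBr -!scalemxAl.
rewrite -!scalemxAr -[u *m M *m o^T]mulmxA Mo -scalemxAr !mxE.
have uo : \sum_j u 0 j * o^T j 0 = \sum_i u 0 i.
  by apply: eq_bigr => i _; rewrite !mxE mulr1.
have ou : \sum_j o 0 j * u^T j 0 = \sum_i u 0 i.
  by apply: eq_bigr => i _; rewrite !mxE mul1r.
have oo : \sum_j o 0 j * o^T j 0 = n%:R.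
  by rewrite (eq_bigr (fun _ => 1)) ?sumr_const ?card_ord // => i _; rewrite !mxE mulr1.
by rewrite uo ou oo -cn; ring.
Qed.

(* The density c = k / N of a set of size k <= a N satisfies c N = k and
   c <= a, including the degenerate case N = 0. *)
Lemma ratio_le (F : realFieldType) (k N a : F) :
  0 <= k -> 0 <= N -> 0 < a -> k <= a * N -> k / N * N = k /\ k / N <= a.
Proof.
move=> k_ge0 N_ge0 a_gt0 k_le; have [N0|N_neq0] := eqVneq N 0.
  rewrite N0 mulr0 in k_le; have -> : k = 0 by apply/le_anti; rewrite k_le k_ge0.
  by rewrite N0 invr0 !mulr0 (ltW a_gt0).
have N_gt0 : 0 < N by rewrite lt0r N_neq0.
by rewrite divfK // ler_pdivrMr.
Qed.

Definition indicator (R : nzRingType) n (T : {set 'I_n}) : 'rV[R]_n :=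
  \row_i (i \in T)%:R.

Definition centred_indicator (R : nzRingType) n (T : {set 'I_n}) (c : R) : 'rV[R]_n :=
  indicator R T - c *: const_mx 1.

Lemma sum_indicator (R : nzRingType) n (T : {set 'I_n}) :
  \sum_i indicator R T 0 i = #|T|%:R.
Proof.
rewrite -sum1_card natr_sum [RHS]big_mkcond /=; apply: eq_bigr => i _.
by rewrite mxE; case: (i \in T).
Qed.

Lemma indicator_norm (R : nzRingType) n (T : {set 'I_n}) :
  (indicator R T *m (indicator R T)^T) 0 0 = #|T|%:R.
Proof.
rewrite -sum_indicator mxE; apply: eq_bigr => i _.
by rewrite !mxE; case: (i \in T); rewrite ?mulr1 ?mulr0.
Qed.

Lemma centred_indicator_sum (R : comNzRingType) n (T : {set 'I_n}) (c : R) :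
  c * n%:R = #|T|%:R -> \sum_i centred_indicator T c 0 i = 0.
Proof.
move=> c_n; rewrite (eq_bigr (fun i => indicator R T 0 i - c)) => [|i _].
  by rewrite sumrB sum_indicator sumr_const card_ord -[c *+ n]mulr_natr c_n subrr.
by rewrite !mxE mulr1.
Qed.

Lemma centred_indicator_norm (R : comNzRingType) n (T : {set 'I_n}) (c : R) :
  c * n%:R = #|T|%:R ->
  let x := centred_indicator T c in (x *m x^T) 0 0 = #|T|%:R - c * #|T|%:R.
Proof.
move=> c_n /=; rewrite -{1}[centred_indicator T c]mulmx1.
have id_ones : (const_mx 1 : 'rV[R]_n) *m 1%:M = 1 *: const_mx 1.
  by rewrite mulmx1 scale1r.
rewrite (centred_form (trmx1 _ _) id_ones) ?sum_indicator // mulmx1.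
by rewrite indicator_norm mulr1.
Qed.

Section RegularGraph.
Variables (R : realFieldType) (n s : nat) (e : rel 'I_n).
Hypotheses (e_sym : symmetric e) (e_reg : regular e s).
Local Notation Adj := (adjmx R e).

Lemma adjmx_sym : Adj^T = Adj.
Proof. by apply/matrixP => i j; rewrite /adjmx !mxE e_sym. Qed.

Lemma adjmx_row_indicator i (T : {set 'I_n}) :
  \sum_j Adj i j * (j \in T)%:R = #|nbhd e i :&: T|%:R.
Proof.
rewrite -sum1_card natr_sum [RHS]big_mkcond /=; apply: eq_bigr => j _.
by rewrite /adjmx !mxE !inE; case: (e i j); case: (j \in T); rewrite ?mulr1 ?mulr0.
Qed.

Lemma adjmx_ones : (const_mx 1 : 'rV[R]_n) *m Adj = s%:R *: const_mx 1.
Proof.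
apply/rowP => j; rewrite !mxE mulr1 -(e_reg j) -(setIT (nbhd e j)).
rewrite -adjmx_row_indicator; apply: eq_bigr => i _.
by rewrite /adjmx !mxE inE e_sym mulr1 mul1r.
Qed.

Lemma adjmx_eigenvalue_le t : root (char_poly Adj) t -> t <= s%:R.
Proof.
apply: eigenvalue_le_col_sum => [i j|j]; first by rewrite /adjmx mxE ler0n.
have /rowP/(_ j) := adjmx_ones; rewrite !mxE mulr1 => <-.
by apply: eq_bigr => i _; rewrite !mxE mul1r.
Qed.

Lemma bdry_deg_compl (S : {set 'I_n}) v : #|nbhd e v :&: S| + bdry_deg e S v = s.
Proof.
rewrite -(e_reg v) -(cardsID S (nbhd e v)); congr (_ + _).
by apply: eq_card => w; rewrite !inE andbC.
Qed.

(* 1_S Adj 1_S^T counts ordered pairs of adjacent vertices in S, that is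
   s |S| minus the number |dS| of edges leaving S. *)
Lemma indicator_form (S : {set 'I_n}) :
  (indicator R S *m Adj *m (indicator R S)^T) 0 0
    = s%:R * #|S|%:R - \sum_(v in S) (bdry_deg e S v)%:R.
Proof.
have row j : (indicator R S *m Adj) 0 j = s%:R - (bdry_deg e S j)%:R.
  rewrite -(bdry_deg_compl S j) natrD addrK -adjmx_row_indicator mxE.
  by apply: eq_bigr => i _; rewrite /adjmx !mxE e_sym mulrC.
transitivity (\sum_(j in S) (s%:R - (bdry_deg e S j)%:R : R)).
  rewrite mxE [RHS]big_mkcond; apply: eq_bigr => j _.
  by rewrite row !mxE; case: (j \in S); rewrite ?mulr1 ?mulr0.
by rewrite sumrB sumr_const mulr_natr.
Qed.

Lemma centred_indicator_form (S : {set 'I_n}) (c : R) :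
  c * n%:R = #|S|%:R -> let x := centred_indicator S c in
  (x *m Adj *m x^T) 0 0
    = s%:R * #|S|%:R - \sum_(v in S) (bdry_deg e S v)%:R - c * s%:R * #|S|%:R.
Proof.
move=> c_n /=; rewrite (centred_form adjmx_sym adjmx_ones) ?sum_indicator //.
by rewrite indicator_form.
Qed.

(* Vertices outside A have fewer than s - b boundary edges, vertices of A
   at most s: hence |dS| <= (s - b) |S| + b |A|. *)
Lemma boundary_le (S : {set 'I_n}) (b : R) :
  \sum_(v in S) (bdry_deg e S v)%:R
    <= (s%:R - b) * #|S|%:R + b * #|[set v in S | s%:R - b <= (bdry_deg e S v)%:R]|%:R.
Proof.
set A := [set v in S | _].
have A_sum : #|A|%:R = \sum_(v in S) ((v \in A)%:R : R).
  rewrite -sum1_card natr_sum big_mkcond [RHS]big_mkcond /=; apply: eq_bigr => v _.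
  by rewrite inE; case: (v \in S); case: (_ <= _).
rewrite A_sum mulr_sumr mulr_natr -sumr_const -big_split /=.
apply: ler_sum => v vS; rewrite inE vS /=.
case: (leP (s%:R - b)) => [_|bd_small]; rewrite ?mulr1 ?mulr0 ?addr0.
  by rewrite subrK ler_nat -(bdry_deg_compl S v) leq_addl.
exact: ltW.
Qed.

Lemma adjmx_eigen_list_le (ev : seq R) :
  eigen_list Adj ev -> (forall t, t \in ev -> t <= s%:R) /\ nth 0 ev 1 <= s%:R.
Proof.
move=> [_ charA]; have ev_le_s t : t \in ev -> t <= s%:R.
  by move=> t_ev; apply: adjmx_eigenvalue_le; rewrite charA root_prod_XsubC.
split=> //; have [ev_big|ev_small] := ltnP 1 (size ev); first exact/ev_le_s/mem_nth.
by rewrite nth_default.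
Qed.

End RegularGraph.

Theorem mainTheorem7 (R : realType) (n s : nat) (e : rel 'I_n)
  (ev : seq R) (alpha b : R) (S : {set 'I_n}) :
  simple_graph e -> regular e s ->
  eigen_list (adjmx R e) ev ->
  0 < alpha -> (#|S|%:R <= alpha * n%:R) ->
  0 < b -> b <= s%:R ->
  let lambda2 := nth 0 ev 1 in
  let A := [set v in S | s%:R - b <= (bdry_deg e S v)%:R] in
  let beta := ((b - lambda2) - alpha * (s%:R - lambda2)) / b in
  beta * #|S|%:R <= #|A|%:R.
Proof.
move=> [e_sym _] e_reg eigen_ev alpha_gt0 S_small b_gt0 _ /=.
have [ev_sorted charA] := eigen_ev.
have [ev_le_s l2_le_s] := adjmx_eigen_list_le e_sym e_reg eigen_ev.
set l2 := nth 0 ev 1 in l2_le_s *; set k : R := #|S|%:R in S_small *.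
have [c_n c_le_alpha] := ratio_le (ler0n _ _) (ler0n _ n) alpha_gt0 S_small.
set c := k / n%:R in c_n c_le_alpha.
have spectral_gap := second_eigenvalue_bound (adjmx_sym R e_sym) ev_sorted charA
  ev_le_s (adjmx_ones R e_sym e_reg) (centred_indicator_sum c_n).
rewrite (centred_indicator_form e_sym e_reg c_n) centred_indicator_norm // -/k -/l2
  in spectral_gap.
have boundary := @boundary_le R n s e e_reg S b; rewrite -/k in boundary.
have slack : 0 <= (s%:R - l2) * k * (alpha - c).
  by rewrite !mulr_ge0 ?ler0n // subr_ge0.
rewrite mulrAC ler_pdivrMr //; lra.
Qed.
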